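(* Let $f$ be an element of the commutator subgroup of $F(\mathcal{R}[t,t^{-1}])$, expanded as $f=\sum_{i\ge0}(t-1)^iA_i$ with $A_i\in M_2(\mathcal{R})$. Then for every $i\ge1$, all entries of $A_i$ lie in $\Sigma$.
   Context: $\mathcal{R}=\mathbb{Z}[x,x^{-1},y,y^{-1}]$; $\Sigma$ is the augmentation ideal of $\mathcal{R}$ (kernel of $x,y\mapsto1$ to $\mathbb{Z}$). $F(\mathcal{R}[t,t^{-1}])$ is the subgroup of $GL_2(\mathcal{R}[t,t^{-1}])$ generated by $M_1=\begin{pmatrix}1&1-y\\0&x\end{pmatrix}$ and $M_2T=\begin{pmatrix}yt&0\\1-xt&1\end{pmatrix}$. Via $t=1+s$, $t^{-1}=\sum_{i\ge0}(-s)^i$, $\mathcal{R}[t,t^{-1}]$ embeds in the power series ring $\mathcal{R}[[s]]$, so each matrix over $\mathcal{R}[t,t^{-1}]$ has a unique expansion $\sum_{i\ge0}(t-1)^iA_i$ with $A_i$ matrices over $\mathcal{R}$ ($A_0$ is the matrix obtained by setting $t=1$). *)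

From HB Require Import structures.
From mathcomp Require Import all_boot all_order all_algebra.
Set Implicit Arguments. Unset Strict Implicit. Unset Printing Implicit Defensive.
Import Order.TTheory GRing.Theory Num.Theory.
Local Open Scope ring_scope.

(* The ring R = Z[x,x^-1,y,y^-1] is realised inside the field             *)
(*   K = Frac(Z[x,y]) = {fraction {poly {poly int}}}                        *)
(* where x is the inner variable and y the outer variable.                *)
Definition Pxy := {poly {poly int}}.
Definition K := {fraction Pxy}.

Definition xK : K := tofrac (('X : {poly int})%:P : Pxy).
Definition yK : K := tofrac ('X : Pxy).

Definition aug (p : Pxy) : int := (p.[1]).[1].

Definition inR (r : K) : Prop :=
  exists (p : Pxy) (a b : nat), r = tofrac p / (xK ^+ a * yK ^+ b).

(* Sigma = augmentation ideal of R = kernel of x,y |-> 1.  For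
   r = p / (x^a y^b) one has eps(r) = p(1,1). *)
Definition inSigma (r : K) : Prop :=
  exists (p : Pxy) (a b : nat),
    r = tofrac p / (xK ^+ a * yK ^+ b) /\ aug p = 0.

(* R[t,t^-1] is realised inside L = Frac(K[t]) = {fraction {poly K}}.      *)
Definition L := {fraction {poly K}}.
Definition tL : L := tofrac ('X : {poly K}).
Definition cL (r : K) : L := tofrac (r%:P).

Definition laurent_rep (g : L) (P : {poly K}) (k : nat) : Prop :=
  (forall j, inR P`_j) /\ g = tofrac P / tL ^+ k.

(* Coefficient of s^m in (1+s)^{-k} : (-1)^m * binomial(k+m-1, m). *)
Definition negbinom (k m : nat) : int := (-1) ^+ m * ('C(k + m - 1, m))%:Z.

(* Coefficient of (t-1)^i in the expansion of P(t) t^{-k} in R[[s]],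
   t = 1 + s, t^{-1} = sum_i (-s)^i : the Cauchy product of the
   coefficients of P(1+s) and of (1+s)^{-k}. *)
Definition exp_coef (P : {poly K}) (k i : nat) : K :=
  \sum_(j < i.+1) (P \Po ('X + 1))`_j * (negbinom k (i - j))%:~R.

Definition M1 : 'M[L]_2 :=
  \matrix_(i < 2, j < 2)
    if (i == 0) && (j == 0) then 1
    else if (i == 0) && (j == 1) then 1 - cL yK
    else if (i == 1) && (j == 0) then 0
    else cL xK.

Definition M2T : 'M[L]_2 :=
  \matrix_(i < 2, j < 2)
    if (i == 0) && (j == 0) then cL yK * tL
    else if (i == 0) && (j == 1) then 0
    else if (i == 1) && (j == 0) then 1 - cL xK * tL
    else 1.

Inductive gen_group (S : 'M[L]_2 -> Prop) : 'M[L]_2 -> Prop :=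
| gg_gen g : S g -> gen_group S g
| gg_one : gen_group S 1%:M
| gg_mul g h : gen_group S g -> gen_group S h -> gen_group S (g *m h)
| gg_inv g : gen_group S g -> gen_group S (invmx g).

Definition Fgrp : 'M[L]_2 -> Prop :=
  gen_group (fun g => g = M1 \/ g = M2T).

Definition comm_subgroup (G : 'M[L]_2 -> Prop) : 'M[L]_2 -> Prop :=
  gen_group (fun c => exists g h, G g /\ G h /\
                       c = invmx g *m invmx h *m g *m h).

(** At [x = y = 1] the generators become [M1 = 1] and
    [M2T = [[t, 0], [1 - t, 1]]], and every element of [F] becomes, up to a
    power of [t], a matrix [[p, 0], [s - p, s]] over [Z[t]].  These matrices
    are simultaneously diagonalisable, so they commute, and a commutator
    specialises to a power [t^k] times the identity.  Writing an entry of a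
    commutator as [n / (x^a y^b t^k)], the augmentation of [n] is [0] or [t^k];
    since [t^k t^-k = 1] in [Z[[t - 1]]], the coefficients of [(t - 1)^i],
    [i >= 1], have augmentation [0].  To make this precise, elements of [F] are
    tracked as [N / D] with [N] a matrix over [Z[x, y][t]] and [D], [det N]
    monomials. *)
From HB Require Import structures.
From mathcomp Require Import all_boot all_order all_algebra.
From mathcomp Require Import ring zify.
Set Implicit Arguments. Unset Strict Implicit. Unset Printing Implicit Defensive.
Import GRing.Theory.
Local Open Scope ring_scope.

Section Matrix2.
Variable R : comNzRingType.
Implicit Types (a b c d e : R) (A B : 'M[R]_2).

Definition mx2 a b c d : 'M[R]_2 :=
  \matrix_(i, j) if i == 0 then (if j == 0 then a else b)
                 else (if j == 0 then c else d).

Lemma mx2_eta A : A = mx2 (A 0 0) (A 0 1) (A 1 0) (A 1 1).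
Proof.
apply/matrixP => i j; rewrite !mxE.
by case: i => [[|[|//]] ?]; case: j => [[|[|//]] ?]; congr (A _ _); apply: val_inj.
Qed.

Lemma mx2_if a b c d :
  \matrix_(i < 2, j < 2)
    (if (i == 0) && (j == 0) then a else if (i == 0) && (j == 1) then b
     else if (i == 1) && (j == 0) then c else d) = mx2 a b c d.
Proof.
apply/matrixP => i j; rewrite !mxE.
by case: i => [[|[|//]] ?]; case: j => [[|[|//]] ?].
Qed.

Lemma mulmx2 a b c d a' b' c' d' :
  mx2 a b c d *m mx2 a' b' c' d' =
  mx2 (a * a' + b * c') (a * b' + b * d') (c * a' + d * c') (c * b' + d * d').
Proof.
apply/matrixP => i j; rewrite !mxE !big_ord_recl big_ord0 addr0 !mxE /=.
by case: i => [[|[|//]] ?]; case: j => [[|[|//]] ?].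
Qed.

Lemma scalemx2 e a b c d : e *: mx2 a b c d = mx2 (e * a) (e * b) (e * c) (e * d).
Proof.
apply/matrixP => i j; rewrite !mxE.
by case: i => [[|[|//]] ?]; case: j => [[|[|//]] ?].
Qed.

Lemma scalar_mx2 e : e%:M = mx2 e 0 0 e.
Proof.
apply/matrixP => i j; rewrite !mxE.
by case: i => [[|[|//]] ?]; case: j => [[|[|//]] ?].
Qed.

Lemma det_mx2 a b c d : \det (mx2 a b c d) = a * d - b * c.
Proof.
rewrite (expand_det_row _ 0) !big_ord_recl big_ord0 /cofactor !det_mx11 !mxE /=.
ring.
Qed.

Lemma adj_mx2 a b c d : \adj (mx2 a b c d) = mx2 d (- b) (- c) a.
Proof.
apply/matrixP => i j; rewrite !mxE /cofactor det_mx11 !mxE.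
by case: i => [[|[|//]] ?]; case: j => [[|[|//]] ?] /=; rewrite ?mxE /=; ring.
Qed.

Lemma det_adj2 A : \det (\adj A) = \det A.
Proof. by rewrite [A]mx2_eta adj_mx2 !det_mx2; ring. Qed.

Lemma scale_adj_scalar2 e : e *: \adj (e%:M) = (e ^+ 2)%:M :> 'M[R]_2.
Proof. by rewrite scalar_mx2 adj_mx2 scalemx2 scalar_mx2; congr mx2; ring. Qed.

(* Matrices [[p, 0], [s - p, s]] are the ones diagonal in the basis
   [(1, -1), (0, 1)], with eigenvalues [p] and [s]. *)
Definition codiag A := exists p s, A = mx2 p 0 (s - p) s.

Lemma codiag_mul A B : codiag A -> codiag B -> codiag (A *m B).
Proof.
move=> [p [s ->]] [p' [s' ->]]; exists (p * p'), (s * s').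
by rewrite mulmx2; congr mx2; ring.
Qed.

Lemma codiag_scale_adj e A : codiag A -> codiag (e *: \adj A).
Proof.
move=> [p [s ->]]; exists (e * s), (e * p).
by rewrite adj_mx2 scalemx2; congr mx2; ring.
Qed.

Lemma codiag_commutator e e' A B : codiag A -> codiag B ->
  (e *: \adj A) *m (e' *: \adj B) *m A *m B = (e * e' * (\det A * \det B))%:M.
Proof.
move=> [p [s ->]] [p' [s' ->]].
by rewrite !adj_mx2 !scalemx2 !mulmx2 !det_mx2 scalar_mx2; congr mx2; ring.
Qed.

End Matrix2.

Lemma map_mx2 (R S : comNzRingType) (f : R -> S) a b c d :
  map_mx f (mx2 a b c d) = mx2 (f a) (f b) (f c) (f d).
Proof.
apply/matrixP => i j; rewrite !mxE.
by case: i => [[|[|//]] ?]; case: j => [[|[|//]] ?].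
Qed.

(** * Matrices over Z[x, y][t] with monomial denominators *)

Definition Pxyt := {poly Pxy}.

Definition embL (P : Pxyt) : L := tofrac (map_poly (@tofrac Pxy) P).

Lemma embL_is_zmod_morphism : zmod_morphism embL.
Proof. by move=> P Q; rewrite /embL !rmorphB. Qed.
HB.instance Definition _ :=
  GRing.isZmodMorphism.Build _ _ embL embL_is_zmod_morphism.

Lemma embL_is_monoid_morphism : monoid_morphism embL.
Proof. by split=> [|P Q]; rewrite /embL ?rmorph1 ?rmorphM. Qed.
HB.instance Definition _ :=
  GRing.isMonoidMorphism.Build _ _ embL embL_is_monoid_morphism.

Lemma embL_inj : injective embL.
Proof.
move=> P Q /eqP; rewrite /embL tofrac_eq => /eqP.
apply: map_inj_poly; last exact: rmorph0.
by move=> p q /eqP; rewrite tofrac_eq => /eqP.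
Qed.

Lemma embL_C c : embL c%:P = cL (tofrac c).
Proof. by rewrite /embL map_polyC. Qed.

Lemma embL_X : embL 'X = tL.
Proof. by rewrite /embL map_polyX. Qed.

Lemma cLV r : cL r^-1 = (cL r)^-1.
Proof. exact: (fmorphV ((@tofrac {poly K}) \o (@polyC K))%FUN). Qed.

Lemma aug_is_zmod_morphism : zmod_morphism aug.
Proof. by move=> p q; rewrite /aug !hornerE. Qed.
HB.instance Definition _ :=
  GRing.isZmodMorphism.Build _ _ aug aug_is_zmod_morphism.

Lemma aug_is_monoid_morphism : monoid_morphism aug.
Proof. by split=> [|p q]; rewrite /aug !hornerE. Qed.
HB.instance Definition _ :=
  GRing.isMonoidMorphism.Build _ _ aug aug_is_monoid_morphism.

Definition augt : {rmorphism Pxyt -> {poly int}} := map_poly aug.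

Definition xP : Pxy := 'X%:P.
Definition yP : Pxy := 'X.
Definition xyP (a b : nat) : Pxy := xP ^+ a * yP ^+ b.
Definition xyK (a b : nat) : K := xK ^+ a * yK ^+ b.
Arguments xyP : simpl never.
Arguments xyK : simpl never.

Lemma augt_C p : augt p%:P = (aug p)%:P.
Proof. exact: map_polyC. Qed.

Lemma augt_X : augt 'X = 'X.
Proof. exact: map_polyX. Qed.

Lemma aug_xP : aug xP = 1.
Proof. by rewrite /aug hornerC hornerX. Qed.

Lemma aug_yP : aug yP = 1.
Proof. by rewrite /aug hornerX hornerC. Qed.

Lemma xyK_add a b a' b' : xyK (a + a') (b + b') = xyK a b * xyK a' b'.
Proof. by rewrite /xyK !exprD; ring. Qed.

Lemma tofrac_xyP a b : tofrac (xyP a b) = xyK a b.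
Proof. by rewrite rmorphM !rmorphXn. Qed.

Lemma xyP_neq0 a b : xyP a b != 0.
Proof. by rewrite mulf_neq0 ?expf_neq0 ?polyC_eq0 ?polyX_eq0. Qed.

Lemma xyK_neq0 a b : xyK a b != 0.
Proof. by rewrite -tofrac_xyP tofrac_eq0 xyP_neq0. Qed.

Definition monom (a b k : nat) : Pxyt := (xyP a b)%:P * 'X^k.
Definition is_monom (D : Pxyt) := exists a b k, D = monom a b k.

Lemma is_monom1 : is_monom 1.
Proof. by exists 0%N, 0%N, 0%N; rewrite /monom /xyP !expr0 !mulr1. Qed.

Lemma is_monomM D D' : is_monom D -> is_monom D' -> is_monom (D * D').
Proof.
move=> [a [b [k ->]]] [a' [b' [k' ->]]].
by exists (a + a')%N, (b + b')%N, (k + k')%N; rewrite /monom /xyP !exprD !rmorphM; ring.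
Qed.

Lemma embL_monom a b k : embL (monom a b k) = cL (xyK a b) * tL ^+ k.
Proof. by rewrite rmorphM rmorphXn /= embL_X embL_C tofrac_xyP. Qed.

Lemma augt_monom a b k : augt (monom a b k) = 'X^k.
Proof.
rewrite rmorphM rmorphXn /= map_polyX map_polyC /= /aug /xyP /xP /yP.
by rewrite !(hornerM, horner_exp, hornerC, hornerX, expr1n, mulr1) mul1r.
Qed.

Lemma embL_monom_neq0 D : is_monom D -> embL D != 0.
Proof.
move=> [a [b [k ->]]]; rewrite embL_monom mulf_neq0 ?expf_neq0 //.
  by rewrite /cL !tofrac_eq0 polyC_eq0 xyK_neq0.
by rewrite /tL tofrac_eq0 polyX_eq0.
Qed.

Definition frac_rep (f : 'M[L]_2) (N : 'M[Pxyt]_2) (D : Pxyt) :=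
  [/\ f = (embL D)^-1 *: map_mx embL N, is_monom D & is_monom (\det N)].

Lemma frac_rep1 : frac_rep 1%:M 1%:M 1.
Proof.
split; rewrite ?det1; try exact: is_monom1.
by rewrite map_mx1 (rmorph1 embL) invr1 scale1r.
Qed.

Lemma frac_rep_map N : is_monom (\det N) -> frac_rep (map_mx embL N) N 1.
Proof. by split=> //; [rewrite (rmorph1 embL) invr1 scale1r | exact: is_monom1]. Qed.

Lemma frac_repM f g N N' D D' : frac_rep f N D -> frac_rep g N' D' ->
  frac_rep (f *m g) (N *m N') (D * D').
Proof.
move=> [-> mD mN] [-> mD' mN']; split; rewrite ?det_mulmx; try exact: is_monomM.
by rewrite -scalemxAl -scalemxAr scalerA map_mxM rmorphM invfM mulrC.
Qed.

Lemma frac_repV f N D : frac_rep f N D ->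
  frac_rep (invmx f) (D *: \adj N) (\det N).
Proof.
move=> [Ef mD mN].
set g := (embL (\det N))^-1 *: map_mx embL (D *: \adj N).
have fg1 : f *m g = 1%:M.
  rewrite Ef /g -scalemxAl -scalemxAr scalerA map_mxZ -scalemxAr -map_mxM.
  rewrite mul_mx_adj map_scalar_mx scalerA scale_scalar_mx -mulrA mulrACA.
  by rewrite !mulVf ?embL_monom_neq0 ?mulr1.
have [fU _] := mulmx1_unit fg1.
have -> : invmx f = g by rewrite -[RHS](mulKmx fU) fg1 mulmx1.
split=> //; rewrite detZ det_adj2 expr2.
by apply: is_monomM => //; apply: is_monomM.
Qed.

(** * The specialisation x = y = 1 on F and on its commutator subgroup *)

Definition F_rep f :=
  exists N D, frac_rep f N D /\ codiag (map_mx augt N).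

Lemma F_rep_M1 : F_rep M1.
Proof.
pose N := mx2 1 (1 - yP%:P) 0 xP%:P.
have -> : M1 = map_mx embL N.
  rewrite /M1 mx2_if map_mx2; congr mx2.
  - by rewrite rmorph1.
  - by rewrite rmorphB rmorph1 /= embL_C.
  - by rewrite rmorph0.
  - by rewrite embL_C.
exists N, 1; split.
  apply: frac_rep_map; exists 1%N, 0%N, 0%N.
  by rewrite det_mx2 /monom /xyP !expr0 !expr1 mul1r mulr0 subr0 !mulr1.
exists 1, 1; rewrite map_mx2; congr mx2.
- exact: rmorph1.
- by rewrite rmorphB rmorph1 augt_C aug_yP subrr.
- by rewrite rmorph0 subrr.
- by rewrite augt_C aug_xP.
Qed.
Lemma F_rep_M2T : F_rep M2T.
Proof.
pose N := mx2 (yP%:P * 'X) 0 (1 - xP%:P * 'X) 1.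
have -> : M2T = map_mx embL N.
  rewrite /M2T mx2_if map_mx2; congr mx2.
  - by rewrite rmorphM /= embL_C embL_X.
  - by rewrite rmorph0.
  - by rewrite rmorphB rmorph1 rmorphM /= embL_C embL_X.
  - by rewrite rmorph1.
exists N, 1; split.
  apply: frac_rep_map; exists 0%N, 1%N, 1%N.
  by rewrite det_mx2 /monom /xyP !expr0 !expr1 !mulr1 mul1r mul0r subr0.
exists 'X, 1; rewrite map_mx2; congr mx2.
- by rewrite rmorphM augt_C augt_X aug_yP mul1r.
- exact: rmorph0.
- by rewrite rmorphB rmorph1 rmorphM augt_C augt_X aug_xP mul1r.
- exact: rmorph1.
Qed.

Lemma F_rep1 : F_rep 1%:M.
Proof.
exists 1%:M, 1; split; first exact: frac_rep1.
by exists 1, 1; rewrite map_mx1 scalar_mx2 subrr.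
Qed.

Lemma F_repM f g : F_rep f -> F_rep g -> F_rep (f *m g).
Proof.
move=> [N [D [rf cf]]] [N' [D' [rg cg]]]; exists (N *m N'), (D * D').
by split; [apply: frac_repM | rewrite map_mxM; apply: codiag_mul].
Qed.

Lemma F_repV f : F_rep f -> F_rep (invmx f).
Proof.
move=> [N [D [rf cf]]]; exists (D *: \adj N), (\det N).
by split; [apply: frac_repV | rewrite map_mxZ map_mx_adj; apply: codiag_scale_adj].
Qed.

Lemma Fgrp_F_rep f : Fgrp f -> F_rep f.
Proof.
elim=> [g [->|->]||g h _ Fg _ Fh|g _ Fg].
- exact: F_rep_M1.
- exact: F_rep_M2T.
- exact: F_rep1.
- exact: F_repM.
- exact: F_repV.
Qed.

Definition C_rep f :=
  exists N D, frac_rep f N D /\ map_mx augt N = (augt D)%:M.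

Lemma C_rep1 : C_rep 1%:M.
Proof.
exists 1%:M, 1; split; first exact: frac_rep1.
by rewrite map_mx1 (rmorph1 augt).
Qed.

Lemma C_repM f g : C_rep f -> C_rep g -> C_rep (f *m g).
Proof.
move=> [N [D [rf ef]]] [N' [D' [rg eg]]]; exists (N *m N'), (D * D').
by split; [apply: frac_repM | rewrite map_mxM ef eg -scalar_mxM (rmorphM augt)].
Qed.

Lemma C_repV f : C_rep f -> C_rep (invmx f).
Proof.
move=> [N [D [rf ef]]]; exists (D *: \adj N), (\det N); split; first exact: frac_repV.
by rewrite map_mxZ map_mx_adj ef scale_adj_scalar2 -det_map_mx ef det_scalar.
Qed.

Lemma C_rep_commutator g h : Fgrp g -> Fgrp h ->
  C_rep (invmx g *m invmx h *m g *m h).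
Proof.
move=> /Fgrp_F_rep [N [D [rg cg]]] /Fgrp_F_rep [N' [D' [rh ch]]].
exists ((D *: \adj N) *m (D' *: \adj N') *m N *m N'), (\det N * \det N' * D * D').
split; first by do 3!apply: frac_repM => //; apply: frac_repV.
rewrite !map_mxM !map_mxZ !map_mx_adj codiag_commutator //.
by rewrite !(rmorphM augt) !det_map_mx; congr (_%:M); ring.
Qed.

Lemma comm_subgroup_C_rep f : comm_subgroup Fgrp f -> C_rep f.
Proof.
elim=> [c [g [h [Fg [Fh ->]]]]||g h _ Cg _ Ch|g _ Cg].
- exact: C_rep_commutator.
- exact: C_rep1.
- exact: C_repM.
- exact: C_repV.
Qed.

(* [exp_coef] over an arbitrary coefficient ring, so that it can be
   transported along ring morphisms such as [tofrac] and [aug]. *)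
Definition laurent_coef (R : comNzRingType) (P : {poly R}) (k i : nat) : R :=
  \sum_(j < i.+1) (P \Po ('X + 1))`_j * (negbinom k (i - j))%:~R.

Lemma rmorph_laurent_coef (R S : comNzRingType) (f : {rmorphism R -> S}) P k i :
  f (laurent_coef P k i) = laurent_coef (map_poly f P) k i.
Proof.
rewrite /laurent_coef rmorph_sum; apply: eq_bigr => j _.
by rewrite rmorphM rmorph_int -coef_map map_comp_poly rmorphD /= map_polyX rmorph1.
Qed.

Lemma laurent_coefCM (R : comNzRingType) c (P : {poly R}) k i :
  laurent_coef (c%:P * P) k i = c * laurent_coef P k i.
Proof.
rewrite /laurent_coef comp_polyM comp_polyC mulr_sumr.
by apply: eq_bigr => j _; rewrite coefCM mulrA.
Qed.

Lemma negbinom0 k : negbinom k 0 = 1.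
Proof. by rewrite /negbinom expr0 mul1r bin0. Qed.

Lemma negbinomS k m : negbinom k.+1 m.+1 + negbinom k.+1 m = negbinom k m.+1.
Proof.
rewrite /negbinom.
have -> : (k.+1 + m.+1 - 1 = (k + m).+1)%N by lia.
have -> : (k.+1 + m - 1 = k + m)%N by lia.
have -> : (k + m.+1 - 1 = k + m)%N by lia.
by rewrite binS PoszD exprS; ring.
Qed.

Definition negbinom_conv (p : {poly int}) (k i : nat) : int :=
  \sum_(j < i.+1) p`_j * negbinom k (i - j).

Lemma negbinom_conv_mulXaddC p k i :
  negbinom_conv (('X + 1) * p) k.+1 i = negbinom_conv p k i.
Proof.
rewrite /negbinom_conv.
under eq_bigr => j _ do rewrite mulrDl coefD coefXM mul1r mulrDl.
rewrite big_split /= big_ord_recl /= mul0r add0r.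
rewrite big_ord_recr /= [RHS]big_ord_recr /= subnn !negbinom0 addrA -big_split /=.
congr (_ + _); apply: eq_bigr => j _.
have -> : (i - j = (i - j.+1).+1)%N by rewrite subnSK.
by rewrite -mulrDr /bump /= add1n add0n addrC negbinomS.
Qed.

Lemma laurent_coef_Xn k i : laurent_coef ('X^k : {poly int}) k i = (i == 0)%:R.
Proof.
have -> : laurent_coef 'X^k k i = negbinom_conv (('X + 1) ^+ k) k i.
  by rewrite /laurent_coef comp_Xn_poly; apply: eq_bigr => j _; rewrite intz.
elim: k => [|k IHk]; last by rewrite exprS negbinom_conv_mulXaddC.
rewrite /negbinom_conv big_ord_recl big1 => [|j _]; last by rewrite coefC mul0r.
rewrite coefC mul1r addr0 subn0 /negbinom.
case: i => [|i].
- by rewrite expr0 bin0 mul1r.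
- by rewrite add0n subn1 bin_small ?mulr0.
Qed.

Lemma laurent_rep_embL (n : Pxyt) a b k :
  laurent_rep ((embL (monom a b k))^-1 * embL n)
              ((xyK a b)^-1%:P * map_poly (@tofrac Pxy) n) k.
Proof.
split=> [j|]; first by rewrite coefCM coef_map; exists n`_j, a, b; exact: mulrC.
have cLxyV : tofrac ((xyK a b)^-1)%:P = (cL (xyK a b))^-1 := cLV _.
by rewrite embL_monom (rmorphM (@tofrac {poly K})) /= cLxyV invfM mulrAC.
Qed.

Lemma common_denominator (P : {poly K}) : (forall j, inR P`_j) ->
  exists a b (Q : Pxyt), (xyK a b)%:P * P = map_poly (@tofrac Pxy) Q.
Proof.
elim/poly_ind: P => [|P c IHP] RP.
  by exists 0%N, 0%N, 0; rewrite mulr0 rmorph0.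
have [a [b [Q EQ]]] : exists a b (Q : Pxyt), (xyK a b)%:P * P = map_poly (@tofrac Pxy) Q.
  by apply: IHP => j; have := RP j.+1; rewrite coefD coefMX coefC addr0.
have [p [a' [b' Ec]]] : inR c by have := RP 0%N; rewrite coefD coefMX coefC add0r.
have Ep : xyK a' b' * c = tofrac p by rewrite Ec mulrC divfK ?xyK_neq0.
exists (a + a')%N, (b + b')%N, (Q * (xyP a' b')%:P * 'X + (xyP a b * p)%:P).
rewrite (rmorphD (map_poly _)) !(rmorphM (map_poly _)) /= map_polyX !map_polyC /=.
rewrite !tofrac_xyP [tofrac (_ * _)]rmorphM /= tofrac_xyP -EQ.
have distr (R : comNzRingType) (u v q x w : R) :
  u * v * (q * x + w) = u * q * v * x + u * (v * w) by ring.
by rewrite -Ep xyK_add polyCM [(xyK a b * _)%:P]polyCM [(xyK a' b' * c)%:P]polyCM distr.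
Qed.

Lemma laurent_rep_aug (n : Pxyt) a b k (e : bool) P k' :
  augt n = 'X^k *+ e ->
  laurent_rep ((embL (monom a b k))^-1 * embL n) P k' ->
  exists a' b' (Q : Pxyt),
    (xyK a' b')%:P * P = map_poly (@tofrac Pxy) Q /\ augt Q = 'X^k' *+ e.
Proof.
move=> augn [RP EP]; have [a' [b' [Q EQ]]] := common_denominator RP.
exists a', b', Q; split=> //.
have tLk'_neq0 : tL ^+ k' != 0 by rewrite expf_neq0 // tofrac_eq0 polyX_eq0.
have EnQ : n * monom a' b' k' = Q * monom a b k.
  apply: embL_inj; rewrite (rmorphM embL n) (rmorphM embL Q) /=.
  have -> : embL Q = cL (xyK a' b') * tofrac P by rewrite /embL -EQ rmorphM.
  have -> : embL n = embL (monom a b k) * (tofrac P / tL ^+ k').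
    by rewrite -EP mulVKf ?embL_monom_neq0 //; do 3!eexists.
  rewrite !embL_monom.
  have cross (F : fieldType) (u v s s' w : F) : s' != 0 ->
    u * s * (w / s') * (v * s') = v * w * (u * s) by move=> ?; field.
  exact: cross.
have := congr1 augt EnQ; rewrite (rmorphM augt n) (rmorphM augt Q) /= !augt_monom augn => E.
have Xk_neq0 : 'X^k != 0 :> {poly int} by rewrite expf_neq0 ?polyX_eq0.
by apply: (mulIf Xk_neq0); rewrite -E !mulrnAl mulrC.
Qed.

Lemma inSigma_exp_coef P a b (Q : Pxyt) k (e : bool) i :
  (xyK a b)%:P * P = map_poly (@tofrac Pxy) Q -> augt Q = 'X^k *+ e ->
  (0 < i)%N -> inSigma (exp_coef P k i).
Proof.
move=> EQ augQ i_gt0; exists (laurent_coef Q k i), a, b; split.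
  have -> : P = (xyK a b)^-1%:P * map_poly (@tofrac Pxy) Q.
    by rewrite -EQ mulrA -polyCM mulVf ?xyK_neq0 ?mul1r.
  by rewrite -[exp_coef _ k i]/(laurent_coef _ k i) laurent_coefCM -rmorph_laurent_coef mulrC.
rewrite (rmorph_laurent_coef aug) -[map_poly aug Q]/(augt Q) augQ.
case: e {augQ}; first by rewrite mulr1n laurent_coef_Xn eqn0Ngt i_gt0.
by rewrite mulr0n /laurent_coef comp_poly0 big1 // => j _; rewrite coef0 mul0r.
Qed.

Theorem lemma5 (f : 'M[L]_2) :
  comm_subgroup Fgrp f ->
  forall (r c : 'I_2),
    (exists (P : {poly K}) (k : nat), laurent_rep (f r c) P k) /\
    (forall (P : {poly K}) (k : nat), laurent_rep (f r c) P k ->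
       forall i : nat, (1 <= i)%N -> inSigma (exp_coef P k i)).
Proof.
move=> /comm_subgroup_C_rep [N [D [[Ef [a [b [k ED]]] _] augN]]] r c.
have Efrc : f r c = (embL (monom a b k))^-1 * embL (N r c) by rewrite Ef !mxE ED.
have augNrc : augt (N r c) = 'X^k *+ (r == c).
  by have := congr1 (fun M : 'M_2 => M r c) augN; rewrite !mxE ED augt_monom.
split; first by exists ((xyK a b)^-1%:P * map_poly (@tofrac Pxy) (N r c)), k;
  rewrite Efrc; apply: laurent_rep_embL.
move=> P k' /[1!Efrc] /(laurent_rep_aug augNrc) [a' [b' [Q [EQ augQ]]]].
by move=> i; apply: inSigma_exp_coef EQ augQ.
Qed.
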